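(* Let $S$ be a finite nonempty set of natural numbers. (1) If $S$ has type $(p,q)$ with $p\geq3$, then some subset of $S$ of cardinality $|S|-1$ has type $(p-1,q)$; symmetrically, if $q\geq 3$ some subset of cardinality $|S|-1$ has type $(p,q-1)$. (2) If $S$ has type $(2,q)$, then some subset of $S$ of cardinality $|S|-1$ is a caterpillar or has a type $(p',q')$ with $p'+q'\leq q$; symmetrically, if $S$ has type $(p,2)$, some subset of cardinality $|S|-1$ is a caterpillar or has a type $(p',q')$ with $p'+q'\leq p$. (3) If $S$ has type $(p,q)$ with $p+q<|S|$, then some subset of $S$ of cardinality $|S|-1$ also has type $(p,q)$. (4) The caterpillars are exactly the finite subsets of $\mathbb N$ having no subset of type $(2,2)$.
   Context: For $m\in\mathbb N$ let $d(m)$ be the finite set of integers with $m=\sum_{i\in d(m)}2^i$. For a finite $S\subset\mathbb N$ with $|S|\geq2$, $s(S)=\max\{i:\exists x,y\in S,\ i\in d(x)\setminus d(y)\}$; with $S_0=\{x\in S:s(S)\notin d(x)\}$, $S_1=\{x\in S:s(S)\in d(x)\}$ (both nonempty), $(S_0,S_1)$ is the split of $S$, written $S=(S_0,S_1)$. Caterpillars: the empty set and singletons are caterpillars; a finite $S$ with $|S|\geq 2$ and split $(S_0,S_1)$ is a caterpillar iff one of $S_0,S_1$ is a singleton and the other a caterpillar. Every finite $S\subset\mathbb N$ that is not a caterpillar, with split $(L,R)$, has a type $t(S)\in\mathbb N\times\mathbb N$ defined recursively: $t(S)=(|L|,|R|)$ if $|L|,|R|\geq 2$; $t(S)=t(L)$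 if $|R|=1$; $t(S)=t(R)$ if $|L|=1$. *)

From mathcomp Require Import all_boot.
From mathcomp Require Import finmap.
Set Implicit Arguments. Unset Strict Implicit. Unset Printing Implicit Defensive.
Local Open Scope fset_scope.

(* d(m): the set of binary digit positions of m, i.e. m = sum_{i in d m} 2^i.
   All such positions are < m.+1 since 2^i > i. *)
Definition d (m : nat) : {fset nat} :=
  [fset i | i in iota 0 m.+1 & odd (m %/ 2 ^ i)].

(* s(S) = max { i | exists x y in S, i in d x \ d y }  (meaningful for |S| >= 2) *)
Definition s (S : {fset nat}) : nat :=
  \max_(x <- S) \max_(y <- S) \max_(i <- d x `\` d y) i.

Definition split0 (S : {fset nat}) : {fset nat} := [fset x in S | s S \notin d x].
Definition split1 (S : {fset nat}) : {fset nat} := [fset x in S | s S \in d x].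

Inductive caterpillar : {fset nat} -> Prop :=
| cat_small S : #|` S| <= 1 -> caterpillar S
| cat_L S : 2 <= #|` S| -> #|` split0 S| = 1 -> caterpillar (split1 S) -> caterpillar S
| cat_R S : 2 <= #|` S| -> #|` split1 S| = 1 -> caterpillar (split0 S) -> caterpillar S.

(* has_type S t  <->  S is not a caterpillar and t(S) = t (graph of the
   recursively defined type function). *)
Inductive has_type : {fset nat} -> nat * nat -> Prop :=
| ty_base S : 2 <= #|` S| -> 2 <= #|` split0 S| -> 2 <= #|` split1 S| ->
    has_type S (#|` split0 S|, #|` split1 S|)
| ty_R S t : 2 <= #|` S| -> #|` split1 S| = 1 -> has_type (split0 S) t -> has_type S t
| ty_L S t : 2 <= #|` S| -> #|` split0 S| = 1 -> has_type (split1 S) t -> has_type S t.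

(* The basic fact is that splits commute with
   restriction: a subset T of S meeting both halves of S has s T = s S, so its
   split is the trace of the split of S (half_restrict). In particular
   removing an element from a half of size >= 2 only shrinks that half.

   A set of type t descends through halves whose complement is a singleton
   until it reaches a core C whose two halves have at least two elements each,
   and t = (|C_0|, |C_1|). Parts (1) and (2) are proved by removing a suitable
   element of the core and lifting the removal back along the descent
   (remove_along_type). Part (3) removes the singleton half at the top of the
   descent. Part (4) combines three facts: caterpillars are closed under
   subsets, every set is either a caterpillar or has a type, and every set
   with a type contains a subset of type (2, 2) drawn from its core. *)

From mathcomp Require Import all_boot.
From mathcomp Require Import finmap zify.
Local Open Scope fset_scope.
Local Open Scope nat_scope.
Set Implicit Arguments. Unset Strict Implicit.

Lemma in_d i m : (i \in d m) = odd (m %/ 2 ^ i).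
Proof.
rewrite /d !inE.
change ((i \in iota 0 m.+1) && odd (m %/ 2 ^ i) = odd (m %/ 2 ^ i)).
rewrite mem_iota add0n /=.
case: (ltnP i m.+1) => //= H.
rewrite divn_small //. exact: leq_trans H (ltnW (ltn_expl _ (ltnSn 1))).
Qed.

Lemma d_inj : injective d.
Proof.
move=> x y Edxy.
have bits i : odd (x %/ 2 ^ i) = odd (y %/ 2 ^ i) by rewrite -!in_d Edxy.
elim: (x + y).+1 {-2}x {-2}y (ltnSn (x + y)) bits => // n IH {Edxy}x {}y Hn bits.
case: (posnP (x + y)) => [/eqP|Hp].
  by rewrite addn_eq0 => /andP [/eqP -> /eqP ->].
rewrite -[x]odd_double_half -[y]odd_double_half.
have := bits 0; rewrite !expn0 !divn1 => ->.
rewrite (_ : x./2 = y./2) //; apply: IH => [|i]; first by rewrite -!divn2; lia.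
by rewrite -!divn2 -!divnMA -!expnS.
Qed.

Lemma differing_digit x y : x != y -> exists i, i \in d x `\` d y \/ i \in d y `\` d x.
Proof.
move=> xy.
have [Hxy|/fset0Pn [i Hi]] := boolP (d x `\` d y == fset0); last by exists i; left.
have [Hyx|/fset0Pn [i Hi]] := boolP (d y `\` d x == fset0); last by exists i; right.
by move: xy; rewrite (@d_inj x y) ?eqxx //; apply/eqP; rewrite eqEfsubset -!fsetD_eq0 Hxy Hyx.
Qed.

Lemma two_elements (A : {fset nat}) : 2 <= #|` A| ->
  exists x y, [/\ x \in A, y \in A & x != y].
Proof.
move=> A2.
have [x xA] : exists x, x \in A by apply/fset0Pn; rewrite -cardfs_gt0; lia.
have : A `\ x != fset0 by rewrite -cardfs_gt0; move: A2; rewrite (cardfsD1 x) xA.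
by case/fset0Pn => y; rewrite in_fsetD1 => /andP [yx yA]; exists x, y; rewrite eq_sym.
Qed.

Lemma s_ub (S : {fset nat}) x y i :
  x \in S -> y \in S -> i \in d x `\` d y -> i <= s S.
Proof.
move=> xS yS ixy; rewrite /s.
apply: leq_trans (leq_bigmax_seq _ xS isT).
apply: leq_trans (leq_bigmax_seq _ yS isT).
exact: leq_bigmax_seq ixy isT.
Qed.

Lemma s_mono (T S : {fset nat}) : T `<=` S -> s T <= s S.
Proof.
move=> /fsubsetP TS; rewrite {1}/s.
apply/bigmax_leqP_seq => x xT _; apply/bigmax_leqP_seq => y yT _.
apply/bigmax_leqP_seq => i ixy _; exact: s_ub (TS _ xT) (TS _ yT) ixy.
Qed.

Lemma s_attained (S : {fset nat}) x y i : x \in S -> y \in S -> i \in d x `\` d y ->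
  exists u v, [/\ u \in S, v \in S & s S \in d u `\` d v].
Proof.
move=> xS yS ixy.
pose attained n := n = 0 \/ exists u v, [/\ u \in S, v \in S & n \in d u `\` d v].
have attained_max m n : attained m -> attained n -> attained (maxn m n).
  by rewrite /maxn; case: ltnP.
have : attained (s S).
  rewrite /s big_seq; apply: big_ind => [|//|u uS]; first by left.
  rewrite big_seq; apply: big_ind => [|//|v vS]; first by left.
  rewrite big_seq; apply: big_ind => [|//|n nuv]; first by left.
  by right; exists u, v.
case=> // s0; exists x, y; split=> //.
by have := s_ub xS yS ixy; rewrite s0 leqn0 => /eqP <-.
Qed.

(* Both parts of the split, indexed by a boolean: half false = S_0 and
   half true = S_1. This lets one argument cover the two symmetric cases. *)
Definition half (b : bool) (S : {fset nat}) : {fset nat} :=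
  if b then split1 S else split0 S.

Lemma in_half b S x : (x \in half b S) = (x \in S) && ((s S \in d x) == b).
Proof. by case: b; rewrite /half /split0 /split1 inE ?eqb_id ?eqbF_neg. Qed.

Lemma half_sub b S : half b S `<=` S.
Proof. by apply/fsubsetP => x; rewrite in_half => /andP []. Qed.

Lemma half_uniq b c S x : x \in half b S -> x \in half c S -> b = c.
Proof. by rewrite !in_half => /andP [_ /eqP <-] /andP [_ /eqP]. Qed.

Lemma half_compl b S : half (~~b) S = S `\` half b S.
Proof.
apply/fsetP => x; rewrite in_fsetD !in_half.
by case: (x \in S); case: b; case: (_ \in d x); rewrite ?andbF.
Qed.

Lemma card_halves b S : #|` S| = #|` half b S| + #|` half (~~b) S|.
Proof. by rewrite half_compl cardfsDS ?half_sub // subnKC // fsubset_leq_card ?half_sub. Qed.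

Lemma card_split S : #|` S| = #|` split0 S| + #|` split1 S|.
Proof. exact: card_halves false S. Qed.

Lemma halves_nonempty S b : 2 <= #|` S| -> half b S != fset0.
Proof.
move=> S2.
have [x [y [xS yS xy]]] := two_elements S2.
have [u [v [uS vS /[!in_fsetD] /andP [v_s u_s]]]] :
    exists u v, [/\ u \in S, v \in S & s S \in d u `\` d v].
  by have [i [] ] := differing_digit xy; apply: s_attained.
by apply/fset0Pn; case: b; [exists u | exists v]; rewrite in_half ?uS ?vS ?eqb_id ?eqbF_neg.
Qed.

Lemma half_restrict S T : T `<=` S -> (forall b, T `&` half b S != fset0) ->
  forall c, half c T = T `&` half c S.
Proof.
move=> TS meet.
have sTS : s T = s S.
  apply/eqP; rewrite eqn_leq s_mono //=.
  have [u /[!(in_fsetI, in_half)] /and3P [uT _ /eqP u_s]] := fset0Pn _ (meet true).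
  have [v /[!(in_fsetI, in_half)] /and3P [vT _ /eqP v_s]] := fset0Pn _ (meet false).
  by apply: (s_ub uT vT); rewrite in_fsetD u_s v_s.
move=> c; apply/fsetP => x; rewrite in_fsetI !in_half sTS.
by case xT: (x \in T); rewrite //= (fsubsetP TS _ xT).
Qed.

Lemma remove_in_half b S x : x \in half b S -> 2 <= #|` half b S| ->
  half b (S `\ x) = half b S `\ x /\ half (~~b) (S `\ x) = half (~~b) S.
Proof.
move=> xb b2.
have trace c : (S `\ x) `&` half c S = half c S `\ x.
  by rewrite fsetIDAC (fsetIidPr (half_sub c S)).
have xnb : x \notin half (~~b) S by rewrite half_compl in_fsetD xb.
have meet c : (S `\ x) `&` half c S != fset0.
  rewrite trace; have [->|->] : c = b \/ c = ~~ b by case: c; case: (b); auto.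
    by rewrite -cardfs_gt0; move: b2; rewrite (cardfsD1 x) xb.
  rewrite (mem_fsetD1 xnb) halves_nonempty //.
  exact: leq_trans b2 (fsubset_leq_card (half_sub b S)).
by rewrite !(half_restrict (fsubD1set S x) meet) !trace (mem_fsetD1 xnb).
Qed.

Lemma type_base C : 2 <= #|` split0 C| -> 2 <= #|` split1 C| ->
  has_type C (#|` split0 C|, #|` split1 C|).
Proof. by move=> C0 C1; apply: ty_base; rewrite // card_split; lia. Qed.

Lemma type_half b S t : 2 <= #|` S| -> #|` half (~~b) S| = 1 ->
  has_type (half b S) t -> has_type S t.
Proof. by case: b; [exact: ty_L | exact: ty_R]. Qed.

Lemma cat_half b S : 2 <= #|` S| -> #|` half (~~b) S| = 1 ->
  caterpillar (half b S) -> caterpillar S.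
Proof. by case: b; [exact: cat_L | exact: cat_R]. Qed.

Lemma type_card S t : has_type S t -> 2 <= #|` S|.
Proof. by case. Qed.

Lemma type_sum S p q : has_type S (p, q) -> p + q <= #|` S|.
Proof.
move Et: (p, q) => t Ht; elim: Ht Et => {S t} [S _ _ _ [-> ->] | S t _ _ _ IH /IH | S t _ _ _ IH /IH];
  by rewrite (card_split S) //; lia.
Qed.

Lemma cat_inv S : caterpillar S -> [\/ #|` S| <= 1,
  #|` split0 S| = 1 /\ caterpillar (split1 S) | #|` split1 S| = 1 /\ caterpillar (split0 S)].
Proof. by case=> {}S; [constructor 1 | constructor 2 | constructor 3]. Qed.

Lemma type_notcat S t : has_type S t -> ~ caterpillar S.
Proof.
elim=> {S t} [S S2 S0 S1 | S t S2 S1 Ht IH | S t S2 S0 Ht IH]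
  /cat_inv [S_le1 | [one cat] | [one cat]]; have := card_split S; try lia.
- by have := type_card Ht; lia.
- by case: IH.
- by case: IH.
- by have := type_card Ht; lia.
Qed.

(* Inductive step of cat_sub: if the complement of half b S is a singleton
   {a} and all subsets of half b S are caterpillars, so are all subsets T of
   S: either T misses a, or T is contained in {a}, or T splits as the trace
   of the split of S. *)
Lemma cat_sub_step b S : #|` half (~~b) S| = 1 ->
  (forall T, T `<=` half b S -> caterpillar T) -> forall T, T `<=` S -> caterpillar T.
Proof.
move=> /eqP /cardfs1P [a Ea] IH T TS.
have in_a x : x \in T -> x \notin half b S -> x = a.
  move=> xT xnb; apply/fset1P; rewrite -Ea half_compl in_fsetD xnb.
  exact: fsubsetP TS x xT.
have [aT | naT] := boolP (a \in T); last first.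
  apply: IH; apply/fsubsetP => x xT; apply/negPn/negP => xnb.
  by move: naT; rewrite -(in_a x xT xnb) xT.
have [Tb0 | Tbn] := eqVneq (T `&` half b S) fset0.
  apply: cat_small; rewrite -(cardfs1 a); apply: fsubset_leq_card.
  apply/fsubsetP => x xT; rewrite in_fset1 (in_a x xT) //; apply/negP => xb.
  have : x \in T `&` half b S by rewrite in_fsetI xT xb.
  by rewrite Tb0 in_fset0.
have meet c : T `&` half c S != fset0.
  have [-> //|->] : c = b \/ c = ~~ b by case: c; case: (b); auto.
  by apply/fset0Pn; exists a; rewrite in_fsetI aT Ea fset11.
have half_T c : 0 < #|` half c T| by rewrite cardfs_gt0 (half_restrict TS meet).
apply: (cat_half (b := b)).
- by rewrite (card_halves b); have := half_T b; have := half_T (~~b); lia.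
- by rewrite (half_restrict TS meet) Ea fsetI1 aT cardfs1.
- by apply: IH; rewrite (half_restrict TS meet); exact: fsubsetIr.
Qed.

Lemma cat_sub S T : caterpillar S -> T `<=` S -> caterpillar T.
Proof.
move=> catS; elim: catS T => {S} [S S_le1 T TS | S _ S0 _ IH | S _ S1 _ IH].
- by apply: cat_small; exact: leq_trans (fsubset_leq_card TS) S_le1.
- exact: (cat_sub_step (b := true)).
- exact: (cat_sub_step (b := false)).
Qed.

Lemma cat_or_type S : caterpillar S \/ exists p q, has_type S (p, q).
Proof.
elim: {S}#|` S|.+1 {-2}S (ltnSn #|` S|) => // n IH S Sn.
have [S_le1|S2] := leqP #|` S| 1; first by left; exact: cat_small.
have descend b : #|` half (~~b) S| = 1 -> caterpillar S \/ exists p q, has_type S (p, q).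
  move=> one; have : #|` half b S| < n by move: Sn; rewrite (card_halves b) one; lia.
  case/IH => [cat | [p [q ty]]]; first by left; exact: cat_half S2 one cat.
  by right; exists p, q; exact: type_half S2 one ty.
have S0_pos : 0 < #|` split0 S| by rewrite cardfs_gt0; exact: halves_nonempty false S2.
have S1_pos : 0 < #|` split1 S| by rewrite cardfs_gt0; exact: halves_nonempty true S2.
have [S1 | S1] := leqP 2 #|` split1 S|; last first.
  have one : #|` split1 S| = 1 by lia.
  exact: descend false one.
have [S0 | S0] := leqP 2 #|` split0 S|; last first.
  have one : #|` split0 S| = 1 by lia.
  exact: descend true one.
by right; exists #|` split0 S|, #|` split1 S|; exact: type_base.
Qed.

Lemma half_union S (B : bool -> {fset nat}) :
  (forall c, B c `<=` half c S) -> (forall c, B c != fset0) ->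
  forall c, half c (B false `|` B true) = B c.
Proof.
move=> BS Bne.
have trace c : (B false `|` B true) `&` half c S = B c.
  apply/fsetP => x; rewrite in_fsetI in_fsetU.
  apply/idP/idP => [/andP [/orP [] xB xc] | xB].
  - by rewrite -(half_uniq (fsubsetP (BS false) x xB) xc).
  - by rewrite -(half_uniq (fsubsetP (BS true) x xB) xc).
  - by rewrite (fsubsetP (BS c) x xB) andbT; case: c xB => ->; rewrite ?orbT.
have TS : B false `|` B true `<=` S.
  by rewrite fsubUset !(fsubset_trans (BS _) (half_sub _ S)).
by move=> c; rewrite (half_restrict TS) ?trace // => b; rewrite trace.
Qed.

(* Every set with a type contains a subset of type (2, 2): two elements
   from each half of the split that defines its type. *)
Lemma type_22 S t : has_type S t -> exists2 T, T `<=` S & has_type T (2, 2).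
Proof.
elim=> {S t} [S _ S0 S1 | S t _ _ _ [T TS ty] | S t _ _ _ [T TS ty]]; last first.
- by exists T => //; exact: fsubset_trans TS (half_sub true S).
- by exists T => //; exact: fsubset_trans TS (half_sub false S).
have [x0 [y0 [x0S y0S xy0]]] := two_elements S0.
have [x1 [y1 [x1S y1S xy1]]] := two_elements S1.
pose B c := if c then [fset x1; y1] else [fset x0; y0].
have BS c : B c `<=` half c S by case: c; apply/fsubsetP => z /fset2P [] ->.
have Bne c : B c != fset0 by case: c; apply/fset0Pn; eexists; exact: fset21.
have B2 c : #|` B c| = 2 by case: c; rewrite cardfs2 ?xy0 ?xy1.
exists (B false `|` B true).
  by rewrite fsubUset !(fsubset_trans (BS _) (half_sub _ S)).
have E0 : split0 (B false `|` B true) = B false := half_union BS Bne false.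
have E1 : split1 (B false `|` B true) = B true := half_union BS Bne true.
by move: (type_base (C := B false `|` B true)); rewrite E0 E1 !B2; apply.
Qed.

Definition cat_or_type_le (n : nat) (T : {fset nat}) : Prop :=
  caterpillar T \/ exists p q, has_type T (p, q) /\ p + q <= n.

Lemma cat_or_type_card T : cat_or_type_le #|` T| T.
Proof.
have [cat | [p [q ty]]] := cat_or_type T; first by left.
by right; exists p, q; split; last exact: type_sum ty.
Qed.

(* Removing x from a half of size >= 2 whose complement is a singleton: the
   removal commutes with the descent into that half, so any type or
   caterpillar property of half b S \ x lifts to S \ x. *)
Section RemoveBelowSingleton.

Variables (b : bool) (S : {fset nat}) (x : nat).
Hypotheses (xb : x \in half b S) (b2 : 2 <= #|` half b S|) (nb1 : #|` half (~~b) S| = 1).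

Let halves_remove := remove_in_half xb b2.

Lemma remove_card : 2 <= #|` S `\ x|.
Proof.
have [Eb Enb] := halves_remove.
rewrite (card_halves b) Eb Enb nb1; move: b2; rewrite (cardfsD1 x) xb; lia.
Qed.

Lemma type_lift t : has_type (half b S `\ x) t -> has_type (S `\ x) t.
Proof.
have [Eb Enb] := halves_remove.
by move=> ty; apply: (type_half (b := b) remove_card); rewrite ?Enb ?Eb.
Qed.

Lemma cat_lift : caterpillar (half b S `\ x) -> caterpillar (S `\ x).
Proof.
have [Eb Enb] := halves_remove.
by move=> cat; apply: (cat_half (b := b) remove_card); rewrite ?Enb ?Eb.
Qed.

Lemma cat_or_type_lift n : cat_or_type_le n (half b S `\ x) -> cat_or_type_le n (S `\ x).
Proof.
case=> [cat | [p [q [ty pq]]]]; first by left; exact: cat_lift.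
by right; exists p, q; split; first exact: type_lift.
Qed.

End RemoveBelowSingleton.

(* Let S have type t, witnessed by a chain of descents
   into halves whose complement is a singleton, ending at a core C with
   t = (|S_0 C|, |S_1 C|). An element removal that works for the core and
   lifts along each descent step works for S. *)
Lemma remove_along_type (P : nat * nat -> Prop) (Q : nat * nat -> {fset nat} -> Prop) :
  (forall t b S x, x \in half b S -> 2 <= #|` half b S| -> #|` half (~~b) S| = 1 ->
     Q t (half b S `\ x) -> Q t (S `\ x)) ->
  (forall C, 2 <= #|` split0 C| -> 2 <= #|` split1 C| -> P (#|` split0 C|, #|` split1 C|) ->
     exists2 x, x \in C & Q (#|` split0 C|, #|` split1 C|) (C `\ x)) ->
  forall S t, has_type S t -> P t -> exists2 x, x \in S & Q t (S `\ x).
Proof.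
move=> lift base S t.
elim=> {S t} [C _ C0 C1 | S t _ S1 ty IH /IH [x x0 Qx] | S t _ S0 ty IH /IH [x x1 Qx]].
- exact: base.
- exists x; first exact: fsubsetP (half_sub false S) x x0.
  exact: (lift t false S x x0 (type_card ty) S1 Qx).
- exists x; first exact: fsubsetP (half_sub true S) x x1.
  exact: (lift t true S x x1 (type_card ty) S0 Qx).
Qed.

(* Part (1): an entry >= 3 of the type is decreased by one by removing an
   element of the corresponding half of the core. *)
Lemma shrink_split0 S t : has_type S t -> 3 <= t.1 ->
  exists2 x, x \in S & has_type (S `\ x) (t.1 - 1, t.2).
Proof.
move: S t; apply: (@remove_along_type (fun t => 3 <= t.1) (fun t T => has_type T (t.1 - 1, t.2))).
  by move=> t b S x xb b2 nb1; exact: type_lift.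
move=> C C0 C1 C0_3.
have [x x0] : exists x, x \in split0 C by apply/fset0Pn; rewrite -cardfs_gt0; lia.
exists x; first exact: fsubsetP (half_sub false C) x x0.
have [E0 E1] := remove_in_half (b := false) x0 C0.
have c0 : #|` split0 (C `\ x)| = #|` split0 C| - 1.
  by rewrite [split0 _]E0 (cardfsD1 x (split0 C)) x0 add1n subn1.
rewrite -c0 -[split1 C]E1; apply: type_base; first by rewrite c0 ltn_subRL.
by rewrite [split1 _]E1.
Qed.

Lemma shrink_split1 S t : has_type S t -> 3 <= t.2 ->
  exists2 x, x \in S & has_type (S `\ x) (t.1, t.2 - 1).
Proof.
move: S t; apply: (@remove_along_type (fun t => 3 <= t.2) (fun t T => has_type T (t.1, t.2 - 1))).
  by move=> t b S x xb b2 nb1; exact: type_lift.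
move=> C C0 C1 C1_3.
have [x x1] : exists x, x \in split1 C by apply/fset0Pn; rewrite -cardfs_gt0; lia.
exists x; first exact: fsubsetP (half_sub true C) x x1.
have [E1 E0] := remove_in_half (b := true) x1 C1.
have c1 : #|` split1 (C `\ x)| = #|` split1 C| - 1.
  by rewrite [split1 _]E1 (cardfsD1 x (split1 C)) x1 add1n subn1.
rewrite -c1 -[split0 C]E0; apply: type_base; last by rewrite c1 ltn_subRL.
by rewrite [split0 _]E0.
Qed.

(* Removing an element from a half of size 2 leaves a singleton half, so the
   result is a caterpillar or has a type coming from the other half. *)
Lemma halve_to_singleton b C x : x \in half b C -> #|` half b C| = 2 ->
  cat_or_type_le #|` half (~~b) C| (C `\ x).
Proof.
move=> xb b2.
have [Eb Enb] := remove_in_half xb (eq_leq (esym b2)).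
have one : #|` half (~~ ~~ b) (C `\ x)| = 1.
  by rewrite negbK Eb; move: b2; rewrite (cardfsD1 x) xb add1n => -[].
have C2 : 2 <= #|` C `\ x|.
  have : 0 < #|` half (~~b) C|.
    by rewrite cardfs_gt0 halves_nonempty // (card_halves b) b2.
  by rewrite (card_halves (~~b) (C `\ x)) Enb one; lia.
have [cat | [p [q [ty pq]]]] := cat_or_type_card (half (~~b) C).
  by left; apply: (cat_half C2 one); rewrite Enb.
by right; exists p, q; split => //; apply: (type_half C2 one); rewrite Enb.
Qed.

(* Part (2): if an entry of the type is 2, remove an element of the
   corresponding half of the core. *)
Lemma reduce_split0 S t : has_type S t -> t.1 = 2 ->
  exists2 x, x \in S & cat_or_type_le t.2 (S `\ x).
Proof.
move: S t; apply: (@remove_along_type (fun t => t.1 = 2) (fun t => cat_or_type_le t.2)).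
  by move=> t b S x xb b2 nb1; exact: cat_or_type_lift.
move=> C C0 _ C0_2.
have [x x0] : exists x, x \in split0 C by apply/fset0Pn; rewrite -cardfs_gt0; lia.
exists x; first exact: fsubsetP (half_sub false C) x x0.
exact: (halve_to_singleton (b := false)).
Qed.

Lemma reduce_split1 S t : has_type S t -> t.2 = 2 ->
  exists2 x, x \in S & cat_or_type_le t.1 (S `\ x).
Proof.
move: S t; apply: (@remove_along_type (fun t => t.2 = 2) (fun t => cat_or_type_le t.1)).
  by move=> t b S x xb b2 nb1; exact: cat_or_type_lift.
move=> C _ C1 C1_2.
have [x x1] : exists x, x \in split1 C by apply/fset0Pn; rewrite -cardfs_gt0; lia.
exists x; first exact: fsubsetP (half_sub true C) x x1.
exact: (halve_to_singleton (b := true)).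
Qed.

(* Part (3): if t(S) = (p, q) with p + q < |S|, the type is not read off S
   itself, so one half of S is a singleton {y} and S \ y is the other half. *)
Lemma remove_singleton_half b S y : half (~~b) S = [fset y] -> S `\ y = half b S.
Proof. by move=> Ey; rewrite -[b]negbK half_compl Ey. Qed.

Lemma keep_type S t : has_type S t -> t.1 + t.2 < #|` S| ->
  exists2 x, x \in S & has_type (S `\ x) t.
Proof.
case=> {S t} [S _ _ _ | S t _ /eqP /cardfs1P [y Ey] ty _ | S t _ /eqP /cardfs1P [y Ey] ty _].
- by rewrite [X in _ < X]card_split ltnn.
- have y1 : y \in split1 S by rewrite Ey fset11.
  exists y; first exact: fsubsetP (half_sub true S) y y1.
  by rewrite (remove_singleton_half (b := false) Ey).
- have y0 : y \in split0 S by rewrite Ey fset11.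
  exists y; first exact: fsubsetP (half_sub false S) y y0.
  by rewrite (remove_singleton_half (b := true) Ey).
Qed.

Lemma delete_witness S (P : {fset nat} -> Prop) : (exists2 x, x \in S & P (S `\ x)) ->
  exists T : {fset nat}, T `<=` S /\ #|` T| = #|` S| - 1 /\ P T.
Proof.
case=> x xS PT; exists (S `\ x); split; first exact: fsubD1set.
by rewrite (cardfsD1 x S) xS add1n subn1.
Qed.

Theorem mainTheorem7 :
  forall S : {fset nat},
    (S != fset0 ->
      (* (1) *)
      (forall p q, has_type S (p, q) ->
         (3 <= p -> exists T : {fset nat},
            T `<=` S /\ #|` T| = #|` S| - 1 /\ has_type T (p - 1, q)) /\
         (3 <= q -> exists T : {fset nat},
            T `<=` S /\ #|` T| = #|` S| - 1 /\ has_type T (p, q - 1))) /\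
      (* (2) *)
      (forall q, has_type S (2, q) -> exists T : {fset nat},
         T `<=` S /\ #|` T| = #|` S| - 1 /\
         (caterpillar T \/ exists p' q', has_type T (p', q') /\ p' + q' <= q)) /\
      (forall p, has_type S (p, 2) -> exists T : {fset nat},
         T `<=` S /\ #|` T| = #|` S| - 1 /\
         (caterpillar T \/ exists p' q', has_type T (p', q') /\ p' + q' <= p)) /\
      (* (3) *)
      (forall p q, has_type S (p, q) -> p + q < #|` S| -> exists T : {fset nat},
         T `<=` S /\ #|` T| = #|` S| - 1 /\ has_type T (p, q))) /\
    (* (4) *)
    (caterpillar S <-> ~ exists T : {fset nat}, T `<=` S /\ has_type T (2, 2)).
Proof.
move=> S; split; [move=> _; split; [|split; [|split]] | split].
- move=> p q ty; split=> big; apply: delete_witness.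
    exact: shrink_split0 ty big.
  exact: shrink_split1 ty big.
- by move=> q ty; apply: delete_witness; exact: reduce_split0 ty erefl.
- by move=> p ty; apply: delete_witness; exact: reduce_split1 ty erefl.
- by move=> p q ty small; apply: delete_witness; exact: keep_type ty small.
- by move=> catS [T [TS ty]]; exact: type_notcat ty (cat_sub catS TS).
- move=> no22; have [// | [p [q ty]]] := cat_or_type S.
  by have [T TS ty22] := type_22 ty; case: no22; exists T.
Qed.
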